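(* For $p\in\mathbb{R}^d\setminus\{0\}$, the solution $u_p$ satisfies $$\max\{0,p\cdot x\}\le u_p(x)\le \max\{0,p\cdot x\}+\|p\|_\infty\quad\text{for all }x\in\mathbb{Z}^d,$$ and $\Delta u_p(x)\le \Delta u_p(0)\,\mathbf 1_{\{u_p=0\}}(x)$ for all $x\in\mathbb{Z}^d$.
   Context: Discrete Laplacian on $\mathbb{Z}^d$: $\Delta u(x)=\sum_{i=1}^d(u(x+e_i)+u(x-e_i)-2u(x))$. For $p\ne0$, $u_p:\mathbb{Z}^d\to\mathbb{R}$ is the unique solution of $\Delta u=0$ on $\{p\cdot x>0\}$, $u=0$ on $\{p\cdot x\le0\}$, $\sup_{p\cdot x>0}|u(x)-p\cdot x|<\infty$. $\|p\|_\infty=\max_k|p_k|$. *)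

From Stdlib Require Import Reals ZArith.
From mathcomp Require Import all_boot.
Set Implicit Arguments. Unset Strict Implicit.

Open Scope R_scope.

Definition pt (d : nat) := 'I_d -> Z.

Definition origin (d : nat) : pt d := fun _ => 0%Z.

Definition shift (d : nat) (x : pt d) (i : 'I_d) (k : Z) : pt d :=
  fun j => if j == i then (x j + k)%Z else x j.

Definition lap (d : nat) (u : pt d -> R) (x : pt d) : R :=
  \big[Rplus/0]_(i < d)
     (u (shift x i 1%Z) + u (shift x i (-1)%Z) - 2 * u x).

Definition dot (d : nat) (p : 'I_d -> R) (x : pt d) : R :=
  \big[Rplus/0]_(i < d) (p i * IZR (x i)).

Definition normInf (d : nat) (p : 'I_d -> R) : R :=
  \big[Rmax/0]_(i < d) Rabs (p i).

Definition is_u_p (d : nat) (p : 'I_d -> R) (u : pt d -> R) : Prop :=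
  (forall x, dot p x > 0 -> lap u x = 0) /\
  (forall x, dot p x <= 0 -> u x = 0) /\
  (exists C : R, forall x, dot p x > 0 -> Rabs (u x - dot p x) <= C).

Definition ind0 (d : nat) (u : pt d -> R) (x : pt d) : R :=
  if Req_EM_T (u x) 0 then 1 else 0.

(* The three claims all follow from one maximum principle on a half-space
   H = {p.x > c}: a function that is bounded above and subharmonic on H and
   nonpositive at the lattice neighbours of H outside H is nonpositive on H.
   To prove it, subtract eps * sqrt (p.x - c + ||p||_oo + 1), which is
   superharmonic and unbounded, so that the positive part lives in a slab;
   near the supremum the deficit from the supremum grows at most by a factor
   2d per lattice step, and walking towards the boundary of H for more steps
   than the width of the slab allows leads to a contradiction.

   Applied to p.x - u, to u - p.x - ||p||_oo and to u(z + .) - u for p.z <= 0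
   this gives the two bounds and the monotonicity of u along directions
   leaving H; monotonicity compares the Laplacian on {p.x <= 0}, where u
   vanishes, with the Laplacian at the origin. *)
From Stdlib Require Import Reals ZArith Lra Lia FunctionalExtensionality Classical.
From HB Require Import structures.
From mathcomp Require Import all_boot.
Open Scope R_scope.
Set Implicit Arguments. Unset Strict Implicit.

HB.instance Definition _ :=
  Monoid.isComLaw.Build R 0 Rplus (fun a b c => esym (Rplus_assoc a b c))
    Rplus_comm Rplus_0_l.

Lemma sumR_le (d : nat) (F G : 'I_d -> R) :
  (forall i, F i <= G i) ->
  \big[Rplus/0]_(i < d) F i <= \big[Rplus/0]_(i < d) G i.
Proof.
move=> FG; apply: (big_ind2 (fun a b => a <= b)) => [|a1 a2 b1 b2|i _]; [lra|lra|exact: FG].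
Qed.

Lemma sumR_mull (d : nat) c (F : 'I_d -> R) :
  \big[Rplus/0]_(i < d) (c * F i) = c * \big[Rplus/0]_(i < d) F i.
Proof.
apply: (big_ind2 (fun a b => a = c * b)) => // [|x1 x2 y1 y2 -> ->]; ring.
Qed.

Lemma sumR_const (d : nat) c : \big[Rplus/0]_(i < d) c = INR d * c.
Proof.
rewrite big_const_ord; elim: d => [|n IH]; first by rewrite /=; ring.
by rewrite iterS IH S_INR; ring.
Qed.

Lemma sumR_ge_term (d : nat) (F : 'I_d -> R) (i : 'I_d) :
  (forall j, 0 <= F j) -> F i <= \big[Rplus/0]_(j < d) F j.
Proof.
move=> F_ge0; rewrite (bigD1 i) //=.
set rest := \big[_/_]_(_ < _ | _) _.
suff : 0 <= rest by lra.
by apply: (big_ind (fun a => 0 <= a)) => [|a b|j _]; [lra|lra|exact: F_ge0].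
Qed.

Lemma normInf_ge_abs (d : nat) (p : 'I_d -> R) i : Rabs (p i) <= normInf p.
Proof.
rewrite /normInf; have : i \in index_enum 'I_d by exact: mem_index_enum.
elim: (index_enum 'I_d) => [|a r IH] //=.
rewrite inE big_cons => /orP [/eqP ->|/IH ir]; first exact: Rmax_l.
exact: Rle_trans ir (Rmax_r _ _).
Qed.

Lemma normInf_ge0 (d : nat) (p : 'I_d -> R) : 0 <= normInf p.
Proof.
apply: (big_rec (fun a => 0 <= a)) => [|i x _ x_ge0]; first lra.
exact: Rle_trans x_ge0 (Rmax_r _ _).
Qed.

Lemma INR_ge1_of_ord (d : nat) (i : 'I_d) : 1 <= INR d.
Proof. apply: (le_INR 1); apply/leP; exact: leq_ltn_trans (leq0n i) (ltn_ord i). Qed.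

Lemma sqrt_midpoint_le s a : 0 < s + a -> 0 < s - a ->
  sqrt (s + a) + sqrt (s - a) <= 2 * sqrt s.
Proof.
move=> sa_gt0 sb_gt0.
have e1 := sqrt_sqrt (s + a) (Rlt_le _ _ sa_gt0).
have e2 := sqrt_sqrt (s - a) (Rlt_le _ _ sb_gt0).
have e3 := sqrt_sqrt s (ltac:(lra) : 0 <= s).
have := sqrt_pos (s + a); have := sqrt_pos (s - a); have := sqrt_pos s.
have := Rle_0_sqr (sqrt (s + a) - sqrt (s - a)); rewrite /Rsqr.
move: e1 e2 e3; set A := sqrt (s + a); set B := sqrt (s - a); set C := sqrt s.
move=> *; have : (A + B) * (A + B) <= (2 * C) * (2 * C) by nra.
nra.
Qed.

Definition pt_add (d : nat) (z y : pt d) : pt d := fun j => (z j + y j)%Z.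

Definition unit_step (k : Z) := (k = 1 \/ k = -1)%Z.

Definition walk (d : nat) (i : 'I_d) (s : Z) (n : nat) (y : pt d) : pt d :=
  iter n (fun w => shift w i s) y.

Lemma dot_shift (d : nat) (p : 'I_d -> R) x i k :
  dot p (shift x i k) = dot p x + p i * IZR k.
Proof.
rewrite /dot (bigD1 i) //= [in RHS](bigD1 i) //= /shift eqxx plus_IZR.
rewrite (eq_bigr (fun j => p j * IZR (x j))) => [|j /negbTE ->] //; ring.
Qed.

Lemma dot_pt_add (d : nat) (p : 'I_d -> R) z y :
  dot p (pt_add z y) = dot p z + dot p y.
Proof. by rewrite /dot -big_split; apply: eq_bigr => j _ /=; rewrite /pt_add plus_IZR; ring. Qed.

Lemma dot_origin (d : nat) (p : 'I_d -> R) : dot p (@origin d) = 0.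
Proof. by apply: big1 => j _; rewrite /origin; ring. Qed.

Lemma dot_walk (d : nat) (p : 'I_d -> R) i s n y :
  dot p (walk i s n y) = dot p y + INR n * (p i * IZR s).
Proof.
elim: n => [|n IH]; first by rewrite /=; ring.
by rewrite /walk iterS dot_shift -/(walk i s n y) IH S_INR; ring.
Qed.

Lemma dot_shift_ge (d : nat) (p : 'I_d -> R) x i k :
  unit_step k -> dot p x - normInf p <= dot p (shift x i k).
Proof.
move=> k_unit; rewrite dot_shift; have := normInf_ge_abs p i.
by case: k_unit => -> /=; split_Rabs; lra.
Qed.

Lemma shift_pt_add (d : nat) (z y : pt d) i k :
  shift (pt_add z y) i k = pt_add z (shift y i k).
Proof. by apply: functional_extensionality => j; rewrite /shift /pt_add; case: (j == i); lia. Qed.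

Lemma shift_as_pt_add (d : nat) (x : pt d) i k :
  shift x i k = pt_add x (shift (@origin d) i k).
Proof.
by apply: functional_extensionality => j; rewrite /shift /pt_add /origin; case: (j == i); lia.
Qed.

Lemma lap_translate (d : nat) (u : pt d -> R) z y :
  lap (fun w => u (pt_add z w)) y = lap u (pt_add z y).
Proof. by apply: eq_bigr => i _; rewrite !shift_pt_add. Qed.

Lemma lap_sub (d : nat) (f g : pt d -> R) y :
  lap (fun w => f w - g w) y = lap f y - lap g y.
Proof.
have -> : lap f y - lap g y = lap f y + (-1) * lap g y by ring.
by rewrite /lap -sumR_mull -big_split; apply: eq_bigr => i _ /=; ring.
Qed.

Lemma lap_scale (d : nat) (f : pt d -> R) c y :
  lap (fun w => c * f w) y = c * lap f y.
Proof. by rewrite /lap -sumR_mull; apply: eq_bigr => i _; ring. Qed.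

Lemma lap_add_const (d : nat) (f : pt d -> R) c y :
  lap (fun w => f w + c) y = lap f y.
Proof. by apply: eq_bigr => i _; ring. Qed.

Lemma lap_dot (d : nat) (p : 'I_d -> R) y : lap (dot p) y = 0.
Proof. by apply: big1 => i _; rewrite !dot_shift; ring. Qed.

(* By subharmonicity, the [2d] nonnegative deficits [S - f] at the
   neighbours sum to at most [2d] times the deficit at [y]. *)
Lemma near_max_spreads (d : nat) (f : pt d -> R) y (S e : R) :
  0 <= lap f y -> f y <= S ->
  (forall i k, unit_step k -> f (shift y i k) <= S) ->
  S - e < f y ->
  forall i k, unit_step k -> S - 2 * INR d * e < f (shift y i k).
Proof.
move=> lap_ge0 fy_le nbr_le fy_gt i k k_unit.
have d_ge1 := INR_ge1_of_ord i.
pose D j := (S - f (shift y j 1)) + (S - f (shift y j (-1))).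
have D_ge0 j : 0 <= D j.
  by have := nbr_le j 1%Z (or_introl erefl); have := nbr_le j (-1)%Z (or_intror erefl);
     rewrite /D; lra.
have D_sum : \big[Rplus/0]_(j < d) D j =
    \big[Rplus/0]_(j < d) (2 * (S - f y)) + (-1) * lap f y.
  by rewrite /lap -sumR_mull -big_split; apply: eq_bigr => j _ /=; rewrite /D; ring.
have := sumR_ge_term i D_ge0; rewrite D_sum sumR_const => Di_le.
have : INR d * (S - f y) < INR d * e by apply: Rmult_lt_compat_l; lra.
by case: k_unit => ->; have := D_ge0 i; rewrite /D in Di_le *;
   have := nbr_le i 1%Z (or_introl erefl); have := nbr_le i (-1)%Z (or_intror erefl); nra.
Qed.

Section HalfSpace.
Variables (d : nat) (p : 'I_d -> R) (c : R).

Section NearSupWalk.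
Variable g : pt d -> R.
Hypothesis g_subharmonic : forall x, c < dot p x -> 0 <= lap g x.
Hypothesis g_le0_outside : forall x i k, c < dot p x -> unit_step k ->
  dot p (shift x i k) <= c -> g (shift x i k) <= 0.

Lemma near_sup_walk (S e : R) i s y n :
  (forall x, c < dot p x -> g x <= S) -> unit_step s ->
  c < dot p y -> S - e < g y -> (2 * INR d) ^ n * e <= S ->
  c < dot p (walk i s n y) /\ S - (2 * INR d) ^ n * e < g (walk i s n y).
Proof.
move=> g_le_S s_unit y_in gy_gt.
have r_ge1 : 1 <= 2 * INR d by have := INR_ge1_of_ord i; lra.
have e_ge0 : 0 <= e by have := g_le_S y y_in; lra.
elim: n => [|n IH] grow; first by rewrite /=; split => //; lra.
have S_ge0 : 0 <= S.
  by apply: Rle_trans grow; apply: Rmult_le_pos => //; apply: pow_le; lra.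
have grow_n : (2 * INR d) ^ n * e <= S.
  apply: Rle_trans grow; apply: Rmult_le_compat_r => //; apply: Rle_pow => //; lia.
have [w_in gw_gt] := IH grow_n.
rewrite /walk iterS -/(walk i s n y); set w := walk i s n y in w_in gw_gt *.
have nbr_le : forall j k, unit_step k -> g (shift w j k) <= S.
  move=> j k k_unit; case: (Rle_or_lt (dot p (shift w j k)) c) => [out|in_H].
  - by have := g_le0_outside w_in k_unit out; lra.
  - exact: g_le_S.
have := near_max_spreads (g_subharmonic w_in) (g_le_S _ w_in) nbr_le gw_gt i s_unit.
have -> : (2 * INR d) ^ n.+1 = 2 * INR d * (2 * INR d) ^ n by [].
rewrite -Rmult_assoc => gws_gt; split => //.
apply: Rnot_le_lt => out; have := g_le0_outside w_in s_unit out.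
by move: grow => /=; lra.
Qed.

Variables (i0 : 'I_d) (B T : R).
Hypothesis p_i0_neq0 : p i0 <> 0.
Hypothesis g_bounded : forall x, c < dot p x -> g x <= B.
Hypothesis g_pos_in_slab : forall x, c < dot p x -> 0 < g x -> dot p x < T.

(* Walking from a point near the supremum in the direction of decreasing
   [p . x] for more steps than the width of the slab leaves the half-space. *)
Lemma le0_of_pos_in_slab x : c < dot p x -> g x <= 0.
Proof.
move=> x_in; apply: Rnot_lt_le => gx_pos.
pose E r := exists y, c < dot p y /\ r = g y.
have E_bound : bound E by exists B => _ [y [y_in ->]]; exact: g_bounded.
have E_gx : exists r, E r by exists (g x), x.
have [S [S_ub S_least]] := @completeness E E_bound E_gx.
have g_le_S y : c < dot p y -> g y <= S by move=> y_in; apply: S_ub; exists y.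
have S_pos : 0 < S by have := g_le_S x x_in; lra.
have q_pos : 0 < Rabs (p i0) by exact: Rabs_pos_lt.
have [K K_gt] := INR_archimed (Rabs (p i0)) (T - c) q_pos.
have rK_ge1 : 1 <= (2 * INR d) ^ K by apply: pow_R1_Rle; have := INR_ge1_of_ord i0; lra.
set e := S / (2 * INR d) ^ K.
have rK_e : (2 * INR d) ^ K * e = S by rewrite /e; field; lra.
have e_pos : 0 < e by rewrite /e; apply: Rdiv_lt_0_compat; lra.
have [y [y_in gy_gt]] : exists y, c < dot p y /\ S - e < g y.
  apply: NNPP => none.
  have : is_upper_bound E (S - e).
    move=> _ [y [y_in ->]]; apply: Rnot_lt_le => gy_gt; apply: none; by exists y.
  by move/S_least; lra.
have [s [s_unit ps]] : exists s, unit_step s /\ p i0 * IZR s = - Rabs (p i0).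
  case: (Rlt_le_dec 0 (p i0)) => p_i0_sgn.
  - by exists (-1)%Z; split; [right|rewrite /=; split_Rabs; lra].
  - by exists 1%Z; split; [left|rewrite /=; split_Rabs; lra].
have [walk_in _] := near_sup_walk i0 g_le_S s_unit y_in gy_gt (Req_le _ _ rK_e).
have := g_pos_in_slab y_in ltac:(nra).
by rewrite dot_walk ps in walk_in; nra.
Qed.

End NearSupWalk.

Definition barrier (w : pt d) := sqrt (dot p w - c + normInf p + 1).

(* Midpoint concavity of [sqrt]; the shift by [||p||_oo + 1] keeps the
   argument positive at all neighbours of the half-space. *)
Lemma lap_barrier_le0 x : c < dot p x -> lap barrier x <= 0.
Proof.
move=> x_in; rewrite -(Rmult_0_r (INR d)) -sumR_const /lap; apply: sumR_le => i.
have := normInf_ge_abs p i; have := normInf_ge0 p => N_ge0 abs_le.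
rewrite /barrier !dot_shift /=.
have := @sqrt_midpoint_le (dot p x - c + normInf p + 1) (p i).
have -> : dot p x + p i * 1 - c + normInf p + 1 = dot p x - c + normInf p + 1 + p i by ring.
have -> : dot p x + p i * -1 - c + normInf p + 1 = dot p x - c + normInf p + 1 - p i by ring.
by move=> /(_ ltac:(split_Rabs; lra) ltac:(split_Rabs; lra)); lra.
Qed.

Variables (f : pt d -> R) (i0 : 'I_d) (B : R).
Hypothesis p_i0_neq0 : p i0 <> 0.
Hypothesis f_bounded : forall x, c < dot p x -> f x <= B.
Hypothesis f_subharmonic : forall x, c < dot p x -> 0 <= lap f x.
Hypothesis f_le0_outside : forall x i k, c < dot p x -> unit_step k ->
  dot p (shift x i k) <= c -> f (shift x i k) <= 0.

(* Subtracting a small multiple of the unbounded barrier confines the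
   positive part of [f] to a slab. *)
Theorem max_principle x : c < dot p x -> f x <= 0.
Proof.
move=> x_in; apply: Rnot_lt_le => fx_pos.
have barrier_ge0 w : 0 <= barrier w by exact: sqrt_pos.
set eps := f x / (barrier x + 1).
have eps_pos : 0 < eps by apply: Rdiv_lt_0_compat; have := barrier_ge0 x; lra.
pose g w := f w - eps * barrier w.
have g_le_f w : g w <= f w by rewrite /g; have := barrier_ge0 w; nra.
have g_subharmonic y : c < dot p y -> 0 <= lap g y.
  move=> y_in; rewrite lap_sub lap_scale.
  by have := f_subharmonic y_in; have := lap_barrier_le0 y_in; nra.
have g_le0_outside y i k : c < dot p y -> unit_step k ->
    dot p (shift y i k) <= c -> g (shift y i k) <= 0.
  by move=> y_in k_unit out; have := f_le0_outside y_in k_unit out; have := g_le_f (shift y i k); lra.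
have g_bounded y : c < dot p y -> g y <= B.
  by move=> y_in; have := f_bounded y_in; have := g_le_f y; lra.
have g_pos_in_slab y : c < dot p y -> 0 < g y -> dot p y < c + (B / eps) ^ 2.
  move=> y_in gy_pos.
  have barrier_lt : barrier y < B / eps.
    apply: (Rmult_lt_reg_l eps) => //; have -> : eps * (B / eps) = B by field; lra.
    by have := f_bounded y_in; rewrite /g in gy_pos; lra.
  have := sqrt_sqrt (dot p y - c + normInf p + 1); rewrite -/(barrier y).
  by have := normInf_ge0 p; have := barrier_ge0 y; move=> *; nra.
have gx_pos : 0 < g x.
  rewrite /g /eps; have := barrier_ge0 x => b_ge0.
  have -> : f x - f x / (barrier x + 1) * barrier x = f x / (barrier x + 1) by field; lra.
  by apply: Rdiv_lt_0_compat; lra.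
have := le0_of_pos_in_slab g_subharmonic g_le0_outside p_i0_neq0 g_bounded g_pos_in_slab x_in.
lra.
Qed.

End HalfSpace.

Section HalfSpaceSolution.
Variables (d : nat) (p : 'I_d -> R) (u : pt d -> R) (i0 : 'I_d) (C : R).
Hypothesis p_i0_neq0 : p i0 <> 0.
Hypothesis u_harmonic : forall x, dot p x > 0 -> lap u x = 0.
Hypothesis u_zero : forall x, dot p x <= 0 -> u x = 0.
Hypothesis u_near_dot : forall x, dot p x > 0 -> Rabs (u x - dot p x) <= C.

Lemma dot_le_u x : 0 < dot p x -> dot p x <= u x.
Proof.
move=> x_in; suff : dot p x - u x <= 0 by lra.
apply: (max_principle (c := 0) (f := fun w => dot p w - u w) (B := C) p_i0_neq0) => //.
- by move=> y /u_near_dot; split_Rabs; lra.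
- by move=> y y_in; rewrite lap_sub lap_dot u_harmonic //; lra.
- by move=> y i k _ _ out; rewrite u_zero //; lra.
Qed.

Lemma u_le_dot_add_normInf x : 0 < dot p x -> u x <= dot p x + normInf p.
Proof.
move=> x_in; suff : u x - dot p x + - normInf p <= 0 by lra.
apply: (max_principle (c := 0) (f := fun w => u w - dot p w + - normInf p) (B := C)
  p_i0_neq0) => //.
- by move=> y /u_near_dot; have := normInf_ge0 p; split_Rabs; lra.
- by move=> y y_in; rewrite lap_add_const lap_sub lap_dot u_harmonic //; lra.
- by move=> y i k y_in k_unit out; rewrite u_zero //; have := dot_shift_ge p y i k_unit; lra.
Qed.

Lemma u_ge0 x : 0 <= u x.
Proof.
case: (Rle_or_lt (dot p x) 0) => [out|x_in]; first by rewrite u_zero //; lra.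
by have := dot_le_u x_in; lra.
Qed.

Lemma u_pt_add_le z y : dot p z <= 0 -> u (pt_add z y) <= u y.
Proof.
move=> z_out; case: (Rle_or_lt (dot p y) (- dot p z)) => [zy_out|y_in].
  by rewrite u_zero ?dot_pt_add; [exact: u_ge0|lra].
suff : u (pt_add z y) - u y <= 0 by lra.
apply: (max_principle (c := - dot p z) (f := fun w => u (pt_add z w) - u w)
  (B := dot p z + 2 * C) p_i0_neq0) => //.
- move=> w w_in; have := @u_near_dot w ltac:(lra).
  by have := @u_near_dot (pt_add z w) ltac:(rewrite dot_pt_add; lra); rewrite dot_pt_add;
     split_Rabs; lra.
- by move=> w w_in; rewrite lap_sub lap_translate !u_harmonic ?dot_pt_add; lra.
- move=> w i k _ _ out; rewrite u_zero ?dot_pt_add; last lra.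
  by have := u_ge0 (shift w i k); lra.
Qed.

Lemma lap_u_le_origin x : dot p x <= 0 -> lap u x <= lap u (@origin d).
Proof.
move=> x_out; apply: sumR_le => i.
rewrite (u_zero x_out) (@u_zero (@origin d)) ?dot_origin; last lra.
rewrite (shift_as_pt_add x i 1) (shift_as_pt_add x i (-1)).
by have := u_pt_add_le (shift (@origin d) i 1) x_out;
   have := u_pt_add_le (shift (@origin d) i (-1)) x_out; lra.
Qed.

End HalfSpaceSolution.

Unset Implicit Arguments.

Theorem mainTheorem5 (d : nat) (p : 'I_d -> R) (hp : exists i, p i <> 0)
  (u : pt d -> R) (hu : is_u_p p u) :
  (forall x : pt d,
     Rmax 0 (dot p x) <= u x <= Rmax 0 (dot p x) + normInf p) /\
  (forall x : pt d, lap u x <= lap u (@origin d) * ind0 u x).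
Proof.
case: hp => i0 p_i0_neq0; case: hu => [u_harmonic [u_zero [C u_near_dot]]].
have := normInf_ge0 p => N_ge0.
have dot_le_u' := dot_le_u p_i0_neq0 u_harmonic u_zero u_near_dot.
split=> x; case: (Rle_or_lt (dot p x) 0) => [x_out|x_in].
- by rewrite u_zero // Rmax_left //; lra.
- rewrite Rmax_right; last lra.
  split; first exact: dot_le_u'.
  exact: u_le_dot_add_normInf p_i0_neq0 u_harmonic u_zero u_near_dot x x_in.
- have -> : ind0 u x = 1 by rewrite /ind0; case: Req_EM_T => // u_neq0; case: u_neq0; exact: u_zero.
  by rewrite Rmult_1_r; apply: lap_u_le_origin p_i0_neq0 u_harmonic u_zero u_near_dot x x_out.
- have := dot_le_u' x x_in => u_pos.
  have -> : ind0 u x = 0 by rewrite /ind0; case: Req_EM_T => // u0; lra.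
  by rewrite u_harmonic //; lra.
Qed.
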